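(* Let $\mathfrak{g}$ be a finite-dimensional real Lie algebra and, for a fixed sign $\pm$, let $\mathbf{M}_{\pm}\colon T^{*}\mathfrak{g} = \mathfrak{g}\times\mathfrak{g}^{*}\to\mathfrak{g}^{*}$ be $\mathbf{M}_{\pm}(q,p) = \mp\operatorname{ad}_{q}^{*}p$. If the center $\mathfrak{z}(\mathfrak{g}) = \{ z\in\mathfrak{g} : [z,x]=0 \ \forall x\in\mathfrak{g}\}$ is nontrivial, then $\mathbf{M}_{\pm}(T^{*}\mathfrak{g}) \subsetneq \mathfrak{g}^{*}$. Equivalently, a necessary condition for $\mathbf{M}_{\pm}(T^{*}\mathfrak{g}) = \mathfrak{g}^{*}$ is that $\mathfrak{z}(\mathfrak{g}) = \{0\}$.
   Context: $\operatorname{ad}_{x}^{*}\colon\mathfrak{g}^{*}\to\mathfrak{g}^{*}$ is the dual of $\operatorname{ad}_{x} = [x,\cdot\,]$, i.e. $\langle \operatorname{ad}_{x}^{*}\alpha, y\rangle = \langle \alpha, [x,y]\rangle$, with $\langle\cdot,\cdot\rangle$ the natural pairing of $\mathfrak{g}^{*}$ and $\mathfrak{g}$. *)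

From HB Require Import structures.
From mathcomp Require Import all_boot all_order all_algebra.
From mathcomp Require Import reals.
Set Implicit Arguments. Unset Strict Implicit. Unset Printing Implicit Defensive.
Import GRing.Theory Num.Theory.
Local Open Scope ring_scope.

Section LieDefs.
Variables (R : realType) (n : nat).
Notation V := 'rV[R]_n.

Definition is_lie_bracket (br : V -> V -> V) : Prop :=
  [/\ (forall (a : R) (x y z : V), br (a *: x + y) z = a *: br x z + br y z),
      (forall (a : R) (x y z : V), br z (a *: x + y) = a *: br z x + br z y),
      (forall x : V, br x x = 0)
    & (forall x y z : V, br x (br y z) + br y (br z x) + br z (br x y) = 0)].

Definition is_dual (alpha : V -> R) : Prop :=
  forall (a : R) (x y : V), alpha (a *: x + y) = a * alpha x + alpha y.

Definition ad_star (br : V -> V -> V) (x : V) (alpha : V -> R) : V -> R :=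
  fun y => alpha (br x y).

(* M_{+-}(q,p) = -+ ad^*_q p ; sgn = true stands for "+", i.e. M_+ = - ad^* *)
Definition Mpm (br : V -> V -> V) (sgn : bool) (q : V) (p : V -> R) : V -> R :=
  fun y => (if sgn then -1 else 1) * ad_star br q p y.

Definition lie_center (br : V -> V -> V) (z : V) : Prop :=
  forall x : V, br z x = 0.
End LieDefs.

(* Every element M(q, p) = -+ p o [q, _] of the image vanishes on the center,
   because [q, z] = - [z, q] = 0 for central z.  A linear functional that does
   not vanish at a nonzero central element (a suitable coordinate) is
   therefore not attained. *)
From mathcomp Require Import all_boot all_order all_algebra.
From mathcomp Require Import reals.
Import GRing.Theory Num.Theory.
Local Open Scope ring_scope.

Section Coadjoint.
Context {R : realType} {n : nat}.
Variable (br : 'rV[R]_n -> 'rV[R]_n -> 'rV[R]_n).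
Hypothesis br_lie : is_lie_bracket br.

Lemma lie_bracketDl (x y w : 'rV[R]_n) : br (x + y) w = br x w + br y w.
Proof. by case: br_lie => brl _ _ _; rewrite -{1}[x]scale1r brl scale1r. Qed.

Lemma lie_bracketDr (x y w : 'rV[R]_n) : br w (x + y) = br w x + br w y.
Proof. by case: br_lie => _ brr _ _; rewrite -{1}[x]scale1r brr scale1r. Qed.

Lemma lie_bracket_anticomm (x y : 'rV[R]_n) : br x y = - br y x.
Proof.
case: br_lie => _ _ brxx _; apply/eqP; rewrite -subr_eq0 opprK.
have := brxx (x + y).
by rewrite lie_bracketDl !lie_bracketDr !brxx add0r addr0 => ->.
Qed.

Lemma lie_bracket_center_eq0 (q z : 'rV[R]_n) : lie_center br z -> br q z = 0.
Proof. by move=> zc; rewrite lie_bracket_anticomm zc oppr0. Qed.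

Lemma dual0 (p : 'rV[R]_n -> R) : is_dual p -> p 0 = 0.
Proof.
move=> p_dual; have := p_dual 1 0 0.
by rewrite scale1r addr0 mul1r -{1}[p 0]addr0 => /addrI <-.
Qed.

Lemma Mpm_dual (sgn : bool) (q : 'rV[R]_n) (p : 'rV[R]_n -> R) :
  is_dual p -> is_dual (Mpm br sgn q p).
Proof.
move=> p_dual a x y; rewrite /Mpm /ad_star.
case: br_lie => _ brr _ _.
by rewrite brr p_dual mulrDr mulrCA.
Qed.

Lemma Mpm_center_eq0 (sgn : bool) (q z : 'rV[R]_n) (p : 'rV[R]_n -> R) :
  is_dual p -> lie_center br z -> Mpm br sgn q p z = 0.
Proof.
by move=> p_dual zc; rewrite /Mpm /ad_star lie_bracket_center_eq0 // dual0 ?mulr0.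
Qed.

End Coadjoint.

Lemma coord_dual {R : realType} {n : nat} (i : 'I_n) :
  is_dual (fun x : 'rV[R]_n => x 0 i).
Proof. by move=> a x y; rewrite !mxE. Qed.

Lemma rowv_neq0_coord {R : realType} {n : nat} (z : 'rV[R]_n) :
  z != 0 -> exists i, z 0 i != 0.
Proof.
move=> z_neq0; apply/existsP; move: z_neq0; apply: contraR => /existsPn z_coord0.
by apply/eqP/rowP => j; rewrite mxE; apply/eqP/negbNE/z_coord0.
Qed.

Theorem proposition4p1 (R : realType) (n : nat)
    (br : 'rV[R]_n -> 'rV[R]_n -> 'rV[R]_n) (sgn : bool) :
  is_lie_bracket br ->
  (exists z : 'rV[R]_n, z != 0 /\ lie_center br z) ->
  (forall (q : 'rV[R]_n) (p : 'rV[R]_n -> R),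
      is_dual p -> is_dual (Mpm br sgn q p)) /\
  (exists alpha : 'rV[R]_n -> R, is_dual alpha /\
     ~ exists (q : 'rV[R]_n) (p : 'rV[R]_n -> R),
         is_dual p /\ forall y, Mpm br sgn q p y = alpha y).
Proof.
move=> br_lie [z [z_neq0 zc]]; split=> [q p|]; first exact: Mpm_dual.
have [i zi_neq0] := rowv_neq0_coord z z_neq0.
exists (fun x => x 0 i); split; first exact: coord_dual.
move=> [q [p [p_dual Mqp_eq]]].
by move: zi_neq0; rewrite -Mqp_eq Mpm_center_eq0 ?eqxx.
Qed.
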